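(* Let $\Delta\subseteq\{0,1\}^N$, $g:\Delta\to\{0,1\}$ a partial Boolean function, and $\delta\in(0,1/2)$. Let $V_1=g^{-1}(1)$ and $V_0=g^{-1}(0)$ (assumed nonempty). Suppose that for some number $K>0$ there is a bipartite graph $H=(V_1\cup V_0,E)$ such that: (i) for every edge $(x,y)\in E$ with $x\in V_1$, $y\in V_0$, there is a sensitive block $B$ of $g$ on $x$ with $y=x^B$; (ii) every $x\in V_1$ has degree $\deg(x)\ge 2K$ in $H$, and the sensitive blocks $B_{x,1},\dots,B_{x,\deg(x)}$ on $x$ corresponding to the edges incident to $x$ are pairwise disjoint; (iii) every $y\in V_0$ has degree at most $d=\left(\frac{1}{2\delta}-1\right)K\frac{|V_1|}{|V_0|}$ in $H$. Then $C_\delta(g)\ge K$.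
   Context: For $x\in\{0,1\}^N$ and $B\subseteq\{1,\dots,N\}$, $x^B$ denotes $x$ with every bit indexed by $B$ flipped. A sensitive block of $g$ on $x\in\Delta$ is a set $B$ such that $x^B\in\Delta$ and $g(x^B)\ne g(x)$. Canonical distribution $\mathcal{D}_g$ on $\Delta$: with probability $1/2$ a uniform element of $g^{-1}(1)$, with probability $1/2$ a uniform element of $g^{-1}(0)$. A certificate of $f:\Delta\to\{0,1\}$ on $x\in\Delta$ is a set $C\subseteq\{1,\dots,N\}$ such that every $y\in\Delta$ with $y|_C=x|_C$ has $f(y)=f(x)$; $C(f)=\max_{x\in\Delta}\min\{|C|: C\text{ certificate of } f \text{ on }x\}$. The $\delta$-approximate certificate complexity is $C_\delta(g)=\min\{C(f): f:\Delta\to\{0,1\},\ \Pr_{x\sim\mathcal{D}_g}[f(x)\ne g(x)]\le\delta\}$. *)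

From mathcomp Require Import all_boot all_order all_algebra.
Set Implicit Arguments. Unset Strict Implicit. Unset Printing Implicit Defensive.
Import Order.TTheory GRing.Theory Num.Theory.

Notation cube N := {ffun 'I_N -> bool}.

Definition flip N (x : cube N) (B : {set 'I_N}) : cube N :=
  [ffun i => if i \in B then ~~ x i else x i].

Definition sensitive_block N (D : {set cube N}) (g : cube N -> bool)
  (x : cube N) (B : {set 'I_N}) : bool :=
  (flip x B \in D) && (g (flip x B) != g x).

Definition is_cert N (D : {set cube N}) (f : cube N -> bool)
  (x : cube N) (C : {set 'I_N}) : bool :=
  [forall y in D, [forall i in C, y i == x i] ==> (f y == f x)].

(* min size of a certificate of f on x; the full set is always a
   certificate, so the default value N is never the result of an empty min *)
Definition cert_size N (D : {set cube N}) (f : cube N -> bool) (x : cube N) : nat :=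
  \big[minn/N]_(C : {set 'I_N} | is_cert D f x C) #|C|.

Definition cert_compl N (D : {set cube N}) (f : cube N -> bool) : nat :=
  \max_(x in D) cert_size D f x.

Definition ones N (D : {set cube N}) (g : cube N -> bool) := [set x in D | g x].
Definition zeros N (D : {set cube N}) (g : cube N -> bool) := [set x in D | ~~ g x].

Local Open Scope ring_scope.

(* Pr_{x ~ D_g}[f x <> g x] for the canonical distribution D_g *)
Definition canon_err (R : realFieldType) N (D : {set cube N}) (g : cube N -> bool)
  (f : cube N -> bool) : R :=
  2^-1 * (#|[set x in ones D g | f x != g x]|%:R / #|ones D g|%:R)
  + 2^-1 * (#|[set x in zeros D g | f x != g x]|%:R / #|zeros D g|%:R).

(* C_delta(g) = min { C(f) : f : D -> {0,1}, err <= delta }; f is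
   represented by a total function whose values outside D are irrelevant.
   f = g always qualifies, so the default N is never returned vacuously. *)
Definition approx_cert (R : realFieldType) N (D : {set cube N}) (g : cube N -> bool)
  (delta : R) : nat :=
  \big[minn/N]_(f : {ffun cube N -> bool} | @canon_err R N D g f <= delta)
     cert_compl D f.

From mathcomp Require Import all_boot all_order all_algebra.
From mathcomp Require Import ring lra.
Import Order.TTheory GRing.Theory Num.Theory.

(* Suppose f has error at most delta but certificates of size < K everywhere.
   At a point x of V_1 where f is right, such a certificate meets fewer than K
   of the >= 2K disjoint blocks at x, so more than K neighbours x^B agree with
   x on it: they are points of V_0 where f is wrong.  Counting these edges from
   V_0, whose degrees are at most d, gives K |V_1| (1 - a) <= d |V_0| b for the
   error rates a on V_1 and b on V_0, which is incompatible with
   (a + b) / 2 <= delta < 1/2. *)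

Set Implicit Arguments.
Unset Strict Implicit.
Unset Printing Implicit Defensive.

Lemma cert_size_witness N (D : {set cube N}) (f : cube N -> bool) (x : cube N) :
  exists2 C, is_cert D f x C & #|C| <= cert_size D f x.
Proof.
rewrite /cert_size.
apply: (big_ind (fun n => exists2 C, is_cert D f x C & #|C| <= n)) => [||C xC];
  last by exists C.
- exists setT; last by rewrite cardsT card_ord.
  apply/forall_inP => y _; apply/implyP => /forall_inP eq_yx.
  by have -> : y = x by apply/ffunP => i; apply/eqP/eq_yx; rewrite inE.
- move=> m n [C1 C1x leC1] [C2 C2x leC2] /=.
  by case: (leqP m n) => _; [exists C1 | exists C2].
Qed.

Lemma cert_size_le_compl N (D : {set cube N}) (f : cube N -> bool) (x : cube N) :
  x \in D -> cert_size D f x <= cert_compl D f.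
Proof. exact: (@leq_bigmax_cond _ (mem D)). Qed.

Lemma cert_compl_le_dim N (D : {set cube N}) (f : cube N -> bool) :
  cert_compl D f <= N.
Proof.
apply/bigmax_leqP => x _; rewrite /cert_size.
apply: (big_ind (fun n => n <= N)) => [//|m n leN _|C _].
  by rewrite geq_min leN.
by rewrite -[leqRHS](card_ord N) max_card.
Qed.

Lemma is_cert_flip N (D : {set cube N}) (f : cube N -> bool) (x : cube N)
    (C B : {set 'I_N}) :
  is_cert D f x C -> flip x B \in D -> [disjoint B & C] -> f (flip x B) = f x.
Proof.
move=> /forall_inP/(_ _ _)/implyP cert xBD disjBC; apply/eqP/cert => //.
apply/forall_inP => i iC; rewrite ffunE.
by rewrite (disjointFl disjBC iC).
Qed.

Lemma card_blocks_meeting (I T : finType) (S : {set I}) (B : I -> {set T})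
    (C : {set T}) :
  {in S &, forall i j, i != j -> [disjoint B i & B j]} ->
  #|[set i in S | ~~ [disjoint B i & C]]| <= #|C|.
Proof.
move=> disjB; set M := [set i in S | _].
pose pt i := [pick t in B i :&: C].
have ptM i : i \in M -> exists2 t, pt i = Some t & t \in B i :&: C.
  rewrite inE -setI_eq0 => /andP[_ /set0Pn[t tBC]].
  by rewrite /pt; case: pickP => [u|/(_ t)]; [exists u | rewrite tBC].
have pt_inj : {in M &, injective pt}.
  move=> i j iM jM; have [t -> /setIP[tBi _]] := ptM i iM.
  have [u -> /setIP[uBj _]] := ptM j jM => -[eq_tu].
  move: iM jM; rewrite !inE => /andP[iS _] /andP[jS _].
  apply: contraTeq isT => /(disjB i j iS jS)/disjointFr/(_ tBi).
  by rewrite eq_tu uBj.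
rewrite -(card_in_imset pt_inj) -(card_imset C (@Some_inj _)).
apply/subset_leq_card/subsetP => _ /imsetP[i iM ->].
by have [t -> /setIP[_ tC]] := ptM i iM; apply: imset_f.
Qed.

Lemma double_count_edges (T U : finType) (E : {set T * U}) (A : {set T}) (Z : {set U}) :
  \sum_(x in A) #|[set y in Z | (x, y) \in E]|
    = \sum_(y in Z) #|[set x in A | (x, y) \in E]|.
Proof.
have card_sum (V : finType) (W : {set V}) (P : pred V) :
    #|[set v in W | P v]| = \sum_(v in W) P v.
  rewrite -sum1_card big_mkcond [RHS]big_mkcond; apply: eq_bigr => v _.
  by rewrite inE; case: (v \in W); case: (P v).
under eq_bigr do rewrite card_sum.
rewrite exchange_big; apply: eq_bigr => y _.
by rewrite card_sum.
Qed.

Lemma card_sepID (T : finType) (A : {set T}) (P : pred T) :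
  #|[set x in A | P x]| + #|[set x in A | ~~ P x]| = #|A|.
Proof.
rewrite -(cardsID [set x | P x] A).
by congr (_ + _); apply: eq_card => x; rewrite !inE andbC.
Qed.

Local Open Scope ring_scope.

Lemma error_balance (R : realFieldType) (delta a b : R) :
  0 < delta -> delta < 2^-1 -> 0 <= a -> 0 <= b -> 2^-1 * a + 2^-1 * b <= delta ->
  ((2 * delta)^-1 - 1) * b < 1 - a.
Proof.
move=> delta_gt0 delta_lt a_ge0 b_ge0 err_le.
have two_delta_gt0 : 0 < 2 * delta by rewrite mulr_gt0.
rewrite -(ltr_pM2l two_delta_gt0) mulrA mulrBr mulfV ?gt_eqF // mulr1.
(* i.e. (1 - 2 delta) b < 2 delta (1 - a), with 0 <= b <= 2 delta - a *)
have b_le : b <= 2 * delta by lra.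
have : 0 < 2 * delta * (1 - 2 * delta) by apply: mulr_gt0; lra.
case: (lerP (4 * delta) 1) => [delta_le | delta_gt].
- have : 0 <= (2 * delta - b) * (1 - 4 * delta) by apply: mulr_ge0; lra.
  nra.
- have : 0 <= b * (4 * delta - 1) by apply: mulr_ge0; lra.
  nra.
Qed.

Lemma canon_err_eq0 (R : realFieldType) N (D : {set cube N}) (g f : cube N -> bool) :
  f =1 g -> canon_err R D g f = 0.
Proof.
move=> fg; rewrite /canon_err.
have no_err (S : {set cube N}) : [set x in S | f x != g x] = set0.
  by apply/setP => x; rewrite !inE fg eqxx andbF.
by rewrite !no_err cards0 !mul0r mulr0 addr0.
Qed.

Lemma approx_cert_ge (R : realFieldType) N (D : {set cube N}) (g : cube N -> bool)
    (delta k : R) :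
  k <= N%:R ->
  (forall f : {ffun cube N -> bool}, canon_err R D g f <= delta -> k <= (cert_compl D f)%:R) ->
  k <= (approx_cert D g delta)%:R.
Proof.
move=> k_le_N k_le_cert; rewrite /approx_cert.
apply: (big_ind (fun n : nat => k <= n%:R)) => // m n km kn.
by case: (leqP m n).
Qed.

Section LowerBound.

Variables (R : realFieldType) (N : nat) (D : {set cube N}) (g : cube N -> bool)
  (delta K : R) (E : {set cube N * cube N}) (blk : cube N -> cube N -> {set 'I_N}).

Hypothesis edge_bipartite :
  forall x y, (x, y) \in E -> (x \in ones D g) && (y \in zeros D g).
Hypothesis edge_block :
  forall x y, (x, y) \in E -> sensitive_block D g x (blk x y) && (y == flip x (blk x y)).
Hypothesis deg_ones : forall x, x \in ones D g -> 2 * K <= #|[set y | (x, y) \in E]|%:R.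
Hypothesis blocks_disjoint : forall x y y', (x, y) \in E -> (x, y') \in E -> y != y' ->
  [disjoint blk x y & blk x y'].

Section SmallCertificates.

Variable f : cube N -> bool.
Hypothesis small_certs : (cert_compl D f)%:R < K.

Let errs0 := [set y in zeros D g | f y != g y].
Let hits1 := [set x in ones D g | f x == g x].

Lemma many_wrong_neighbours x : x \in hits1 ->
  K < #|[set y in errs0 | (x, y) \in E]|%:R.
Proof.
rewrite inE => /andP[x1 /eqP fx].
have xD : x \in D by move: x1; rewrite inE => /andP[].
have [C certC leC] := cert_size_witness D f x.
have C_lt : #|C|%:R < K.
  by apply: le_lt_trans small_certs; rewrite ler_nat (leq_trans leC) ?cert_size_le_compl.
set nbrs := [set y | (x, y) \in E].
set meet := [set y in nbrs | ~~ [disjoint blk x y & C]].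
have meet_le : (#|meet| <= #|C|)%N.
  by apply: card_blocks_meeting => y y'; rewrite !inE; apply: blocks_disjoint.
have nbrs_sub : nbrs \subset meet :|: [set y in errs0 | (x, y) \in E].
  apply/subsetP => y yN; have xyE : (x, y) \in E by rewrite inE in yN.
  have /andP[_ y0] := edge_bipartite xyE.
  have /andP[/andP[flipD _] /eqP y_flip] := edge_block xyE.
  rewrite in_setU !inE xyE /=.
  case: (boolP [disjoint blk x y & C]) => //= disjBC.
  move: y0 x1; rewrite !inE => /andP[-> /negPf ->] /andP[_ gx].
  by rewrite y_flip (is_cert_flip certC flipD disjBC) fx gx.
have := leq_trans (subset_leq_card nbrs_sub) (leq_card_setU _ _).
rewrite -(ler_nat R) natrD => /(le_trans (deg_ones x1)).
move: meet_le; rewrite -(ler_nat R) => meet_le.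
lra.
Qed.

Lemma hits_edge_bound :
  K * #|hits1|%:R <= \sum_(y in errs0) #|[set x | (x, y) \in E]|%:R.
Proof.
rewrite mulr_natr -sumr_const.
apply: (@le_trans _ _ (\sum_(x in hits1) #|[set y in errs0 | (x, y) \in E]|%:R)).
  by apply: ler_sum => x /many_wrong_neighbours/ltW.
rewrite -!natr_sum ler_nat double_count_edges; apply: leq_sum => y _.
by apply/subset_leq_card/subsetP => x; rewrite !inE => /andP[_ ->].
Qed.

End SmallCertificates.

Hypotheses (delta_gt0 : 0 < delta) (delta_lt_half : delta < 2^-1) (K_gt0 : 0 < K).
Hypotheses (ones_nonempty : ones D g != set0) (zeros_nonempty : zeros D g != set0).
Hypothesis deg_zeros : forall y, y \in zeros D g ->
  #|[set x | (x, y) \in E]|%:R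
    <= ((2 * delta)^-1 - 1) * K * (#|ones D g|%:R / #|zeros D g|%:R).

Lemma cert_compl_ge (f : cube N -> bool) :
  canon_err R D g f <= delta -> K <= (cert_compl D f)%:R.
Proof.
move=> err_le; rewrite leNgt; apply/negP => /hits_edge_bound.
have hits_card : #|[set x in ones D g | f x == g x]|%:R
    = #|ones D g|%:R - #|[set x in ones D g | f x != g x]|%:R :> R.
  by rewrite -(card_sepID (ones D g) (fun x => f x == g x)) natrD addrK.
pose d := ((2 * delta)^-1 - 1) * K * (#|ones D g|%:R / #|zeros D g|%:R).
set errs0 := [set y in zeros D g | f y != g y].
have deg_errs0 : \sum_(y in errs0) #|[set x | (x, y) \in E]|%:R <= #|errs0|%:R * d.
  rewrite mulr_natl -sumr_const; apply: ler_sum => y.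
  by rewrite inE => /andP[/deg_zeros].
rewrite hits_card => /le_trans/(_ deg_errs0).
have n1_gt0 : 0 < #|ones D g|%:R :> R by rewrite ltr0n card_gt0.
have n0_gt0 : 0 < #|zeros D g|%:R :> R by rewrite ltr0n card_gt0.
move: err_le; rewrite /canon_err -/errs0.
set a := #|[set x in ones D g | _]|%:R / _; set b := #|errs0|%:R / _.
have -> : K * (#|ones D g|%:R - #|[set x in ones D g | f x != g x]|%:R)
    = K * #|ones D g|%:R * (1 - a) by rewrite /a; field; rewrite gt_eqF.
have -> : #|errs0|%:R * d = K * #|ones D g|%:R * (((2 * delta)^-1 - 1) * b).
  by rewrite /d /b; field; rewrite !gt_eqF.
rewrite ler_pM2l ?mulr_gt0 // => err_le; apply/negP; rewrite -ltNge.
by apply: error_balance; rewrite ?divr_ge0.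
Qed.

End LowerBound.

Theorem theorem5p10 (R : realFieldType) (N : nat) (D : {set cube N})
  (g : cube N -> bool) (delta K : R)
  (E : {set cube N * cube N}) (blk : cube N -> cube N -> {set 'I_N}) :
  0 < delta -> delta < 2^-1 ->
  ones D g != set0 -> zeros D g != set0 ->
  0 < K ->
  (* H is a bipartite graph between V_1 and V_0 *)
  (forall x y, (x, y) \in E -> (x \in ones D g) && (y \in zeros D g)) ->
  (* (i) each edge corresponds to a sensitive block on x *)
  (forall x y, (x, y) \in E -> sensitive_block D g x (blk x y) && (y == flip x (blk x y))) ->
  (* (ii) degree >= 2K and pairwise disjoint blocks *)
  (forall x, x \in ones D g ->
     2 * K <= #|[set y | (x, y) \in E]|%:R) ->
  (forall x y y', (x, y) \in E -> (x, y') \in E -> y != y' ->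
     [disjoint blk x y & blk x y']) ->
  (* (iii) degree bound on V_0 *)
  (forall y, y \in zeros D g ->
     #|[set x | (x, y) \in E]|%:R
       <= ((2 * delta)^-1 - 1) * K * (#|ones D g|%:R / #|zeros D g|%:R)) ->
  K <= (approx_cert D g delta)%:R.
Proof.
move=> delta_gt0 delta_lt_half ones_nonempty zeros_nonempty K_gt0
  edge_bipartite edge_block deg_ones blocks_disjoint deg_zeros.
have K_le_cert := cert_compl_ge edge_bipartite edge_block deg_ones blocks_disjoint
  delta_gt0 delta_lt_half K_gt0 ones_nonempty zeros_nonempty deg_zeros.
apply: approx_cert_ge => [|f]; last exact: K_le_cert.
have /K_le_cert K_le_cert_g : canon_err R D g g <= delta.
  by rewrite canon_err_eq0 ?ltW.
by apply: le_trans K_le_cert_g _; rewrite ler_nat cert_compl_le_dim.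
Qed.
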